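(* Let $\Gamma$ be a countable digraph such that (C1) ${\rm desc}(u)\cong\Gamma$ for all $u\in\Gamma$, and (C2) for every finitely generated descendant-closed subdigraph $X$ of $\Gamma$, the subgroup of ${\rm Aut}(X)$ of automorphisms extending to automorphisms of $\Gamma$ has countable index in ${\rm Aut}(X)$. Let $\mathcal C_\Gamma$ be the class of digraphs $A$ such that (D1) ${\rm desc}(a)\cong\Gamma$ for all $a\in A$, (D2) $A$ is finitely generated, and (D3) ${\rm desc}(a)\cap{\rm desc}(b)$ is finitely generated for all $a,b\in A$. Then for every $A\in\mathcal C_\Gamma$ there are only countably many isomorphism types of $\le$-embeddings $f:A\to B$ with $B\in\mathcal C_\Gamma$.
   Context: Subdigraphs are full induced subdigraphs. For a digraph, an $s$-arc ($s\ge0$) from $u_0$ to $u_s$ is a sequence $u_0\ldots u_s$ with each $(u_i,u_{i+1})$ a directed edge and $u_{i-1}\ne u_{i+1}$ for $0<i<s$; ${\rm desc}(u)$ is the set of vertices reachable from $u$ by an $s$-arc for some $s\ge0$ (as an induced subdigraph), and ${\rm desc}(Y)=\bigcup_{y\in Y}{\rm desc}(y)$. $A\le B$ (descendant-closed) means ${\rm desc}_B(a)\subseteq A$ for all $a\in A$; a descendant-closed set (or a digraph) is finitely generated if it equals ${\rm desc}(Z)$ for some finite set $Z$ of its vertices. A $\le$-embedding is an embedding $f:A\to B$ onto an induced subdigraph with $f(A)\le B$. Two $\le$-embeddings $f_1:A\to B_1$, $f_2:A\to B_2$ are isomorphic if there is an isomorphism $h:B_1\to B_2$ with $f_2=h\circ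 f_1$; isomorphism types are counted with respect to this relation, with $B$ varying over $\mathcal C_\Gamma$. *)

From Stdlib Require Import List.
Import ListNotations.

Record digraph : Type := Digraph {
  vert :> Type;
  edge : vert -> vert -> Prop;
  edge_irrefl : forall x, ~ edge x x;
  edge_asym : forall x y, edge x y -> ~ edge y x
}.
Arguments edge {d} _ _.

Definition induced (G : digraph) (P : G -> Prop) : digraph :=
  {| vert := {x : G | P x};
     edge := fun x y => edge (proj1_sig x) (proj1_sig y);
     edge_irrefl := fun x => edge_irrefl G (proj1_sig x);
     edge_asym := fun x y => edge_asym G (proj1_sig x) (proj1_sig y) |}.

Fixpoint is_arc (G : digraph) (l : list G) : Prop :=
  match l with
  | [] => False
  | [_] => True
  | x :: ((y :: rest) as tl) =>
      edge x y /\ is_arc G tl /\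
      match rest with [] => True | z :: _ => x <> z end
  end.

Definition desc (G : digraph) (u : G) (v : G) : Prop :=
  exists l : list G, is_arc G (u :: l) /\ last (u :: l) u = v.

Definition desc_list (G : digraph) (Y : list G) (v : G) : Prop :=
  exists y, In y Y /\ desc G y v.

Record iso (G H : digraph) : Type := Iso {
  fwd : G -> H;
  bwd : H -> G;
  bwd_fwd : forall x, bwd (fwd x) = x;
  fwd_bwd : forall y, fwd (bwd y) = y;
  fwd_edge : forall x y, edge x y <-> edge (fwd x) (fwd y)
}.
Arguments fwd {G H} _ _.
Arguments bwd {G H} _ _.

Definition isomorphic (G H : digraph) : Prop := inhabited (iso G H).

Definition countable_digraph (G : digraph) : Prop :=
  exists f : G -> nat, forall x y, f x = f y -> x = y.

Definition desc_closed (G : digraph) (P : G -> Prop) : Prop :=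
  forall a v, P a -> desc G a v -> P v.

Definition fin_gen_set (G : digraph) (P : G -> Prop) : Prop :=
  exists Z : list G, (forall z, In z Z -> P z) /\
                     (forall v, P v <-> desc_list G Z v).

Definition fin_gen (G : digraph) : Prop := fin_gen_set G (fun _ => True).

(* (C2) for a subset X: the subgroup of Aut(X) of automorphisms extending to
   automorphisms of G has countable index in Aut(X): there are countably
   many coset representatives r_n with every h in some r_n H. *)
Definition ext_countable_index (G : digraph) (X : G -> Prop) : Prop :=
  exists reps : nat -> iso (induced G X) (induced G X),
    forall h : iso (induced G X) (induced G X),
      exists n (g : iso G G),
        forall x : induced G X,
          proj1_sig (bwd (reps n) (fwd h x)) = fwd g (proj1_sig x).

Definition in_C (Gamma A : digraph) : Prop :=
  (forall a : A, isomorphic (induced A (desc A a)) Gamma) /\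
  fin_gen A /\
  (forall a b : A, fin_gen_set A (fun v => desc A a v /\ desc A b v)).

Definition le_embedding (A B : digraph) (f : A -> B) : Prop :=
  (forall x y, f x = f y -> x = y) /\
  (forall x y, edge x y <-> edge (f x) (f y)) /\
  desc_closed B (fun b => exists a, f a = b).

Definition iso_embeddings (A B1 B2 : digraph) (f1 : A -> B1) (f2 : A -> B2)
  : Prop :=
  exists h : iso B1 B2, forall a, f2 a = fwd h (f1 a).

From Stdlib Require Import List Relations Classical ClassicalEpsilon ProofIrrelevance Cantor.
Import ListNotations.

(* Each embedding f : A -> B is taken together with a generating list Z of B and classified,
   by induction on j, up to partial isomorphisms of its j-th stage (the image of A together
   with desc Z_0, ..., desc Z_(j-1)) that commute with f.  To pass from j to j+1, the next
   generator d spans a copy of Gamma whose overlap with the j-th stage is finitely generated by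
   (D2) and (D3); so d is attached to a representative of stage j through a partial
   isomorphism between finitely generated descendant-closed sets, and by (C2) such maps fall
   into countably many classes up to automorphisms of Gamma.  Two embeddings with the same
   finite data glue to a partial isomorphism of their (j+1)-th stages, and the data range over
   a countable set because Gamma, hence every member of C_Gamma, is countable. *)

Notation reach G := (clos_refl_trans_1n (vert G) (@edge G)).

Lemma last_cons_default {T} (y : T) l d d' : last (y :: l) d = last (y :: l) d'.
Proof.
  revert y; induction l as [|z l IH]; intros y; simpl; auto.
  destruct l; auto. apply (IH z).
Qed.

(* The condition [u_{i-1} <> u_{i+1}] on arcs is automatic: a 2-cycle would contradict asymmetry. *)
Lemma desc_iff_reach G u v : desc G u v <-> reach G u v.
Proof.
  split.
  - intros [l [Ha Hl]]. revert u Ha Hl. induction l as [|w l IH]; intros u Ha Hl.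
    + simpl in Hl. subst. constructor.
    + destruct Ha as [He [Ha _]]. econstructor; [exact He|]. apply IH; auto.
      simpl in Hl. rewrite (last_cons_default w l w u). exact Hl.
  - induction 1 as [x|x y z Hxy Hyz IH].
    + exists []. simpl. auto.
    + destruct IH as [l [Ha Hl]]. exists (y :: l). split.
      * change (edge x y /\ is_arc G (y :: l) /\ match l with [] => True | z :: _ => x <> z end).
        split; [exact Hxy|]. split; [exact Ha|]. destruct l as [|w l']; auto.
        intro E. subst w. destruct Ha as [Hyw _]. exact (edge_asym _ _ _ Hxy Hyw).
      * change (last (y :: l) x = z). rewrite (last_cons_default y l x y). exact Hl.
Qed.

Lemma reach_trans (G : digraph) (x y z : G) : reach G x y -> reach G y z -> reach G x z.
Proof.
  intros Hxy Hyz. apply clos_rt_rt1n.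
  apply rt_trans with y; apply clos_rt1n_rt; assumption.
Qed.

Definition edge_closed (G : digraph) (P : G -> Prop) := forall x y, P x -> edge x y -> P y.

Lemma edge_closed_reach (G : digraph) P (x y : G) : edge_closed G P -> P x -> reach G x y -> P y.
Proof. intros HP Hx H; induction H; eauto. Qed.

Lemma edge_closed_ext (G : digraph) (P Q : G -> Prop) :
  (forall x, P x <-> Q x) -> edge_closed G P -> edge_closed G Q.
Proof. intros E H x y Hx He. apply E. apply (H x y); auto. apply E; auto. Qed.

Lemma edge_closed_reach1 (G : digraph) (u : G) : edge_closed G (reach G u).
Proof. intros x y H He. apply (reach_trans _ _ x); auto. apply clos_rt1n_step; auto. Qed.

Definition reach_from (G : digraph) (Z : list G) (v : G) := exists z, In z Z /\ reach G z v.

Lemma desc_list_iff_reach_from G Z v : desc_list G Z v <-> reach_from G Z v.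
Proof.
  unfold desc_list, reach_from.
  split; intros [z [H1 H2]]; exists z; split; auto; apply desc_iff_reach; auto.
Qed.

Lemma edge_closed_reach_from G Z : edge_closed G (reach_from G Z).
Proof. intros x y [z [Hz Hr]] He. exists z; split; auto. apply (edge_closed_reach1 _ z x); auto. Qed.

Lemma reach_from_app G l1 l2 v : reach_from G (l1 ++ l2) v <-> reach_from G l1 v \/ reach_from G l2 v.
Proof.
  unfold reach_from. split.
  - intros [z [Hz Hr]]. apply in_app_or in Hz. destruct Hz; [left|right]; eauto.
  - intros [[z [Hz Hr]]|[z [Hz Hr]]]; exists z; split; auto; apply in_or_app; auto.
Qed.

Lemma reach_from_one G d v : reach_from G [d] v <-> reach G d v.
Proof.
  unfold reach_from. split; [intros [z [[<-|[]] H]]; auto|].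
  intros; exists d; simpl; auto.
Qed.

Lemma reach_from_desc_closed (G : digraph) L : desc_closed G (reach_from G L).
Proof.
  intros a v Ha Hd. apply desc_iff_reach in Hd.
  eapply edge_closed_reach; eauto. apply edge_closed_reach_from.
Qed.

Lemma reach_from_fin_gen (G : digraph) L : fin_gen_set G (reach_from G L).
Proof.
  exists L. split.
  - intros z Hz. exists z; split; auto; constructor.
  - intros v. rewrite desc_list_iff_reach_from. tauto.
Qed.

Lemma list_images {T U} (R : T -> U -> Prop) (N : list T) :
  (forall x, In x N -> exists y, R x y) ->
  exists M, (forall y, In y M -> exists x, In x N /\ R x y) /\
            (forall x, In x N -> exists y, In y M /\ R x y).
Proof.
  induction N as [|x N IH]; intros H.
  - exists []. simpl; split; intros; contradiction.
  - destruct (H x (or_introl eq_refl)) as [y Hy].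
    destruct IH as [M [H1 H2]]; [intros; apply H; simpl; auto|].
    exists (y :: M). split.
    + intros y' [<-|Hy']; [exists x; simpl; auto|].
      destruct (H1 _ Hy') as [x' [? ?]]; exists x'; simpl; auto.
    + intros x' [<-|Hx']; [exists y; simpl; auto|].
      destruct (H2 _ Hx') as [y' [? ?]]; exists y'; simpl; auto.
Qed.

Definition partial_iso (X Y : digraph) (R : X -> Y -> Prop) : Prop :=
  (forall x y y', R x y -> R x y' -> y = y') /\
  (forall x x' y, R x y -> R x' y -> x = x') /\
  (forall x x' y y', R x y -> R x' y' -> (edge x x' <-> edge y y')).
Definition dom {X Y : Type} (R : X -> Y -> Prop) x := exists y, R x y.
Definition ran {X Y : Type} (R : X -> Y -> Prop) y := exists x, R x y.
Definition rel_inv {X Y : Type} (R : X -> Y -> Prop) := fun y x => R x y.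
Definition rel_comp {X Y Z : Type} (R1 : X -> Y -> Prop) (R2 : Y -> Z -> Prop) :=
  fun x z => exists y, R1 x y /\ R2 y z.

Definition partial_iso_on (X Y : digraph) (D : X -> Prop) (E : Y -> Prop) (R : X -> Y -> Prop) :=
  partial_iso X Y R /\ (forall x, D x <-> dom R x) /\ (forall y, E y <-> ran R y).

Lemma partial_iso_inv (X Y : digraph) (R : X -> Y -> Prop) : partial_iso X Y R -> partial_iso Y X (rel_inv R).
Proof.
  unfold partial_iso, rel_inv. intros [H1 [H2 H3]].
  split; [|split]; eauto. intros; symmetry; eauto.
Qed.

Lemma partial_iso_comp (X Y Z : digraph) (R1 : X -> Y -> Prop) (R2 : Y -> Z -> Prop) :
  partial_iso X Y R1 -> partial_iso Y Z R2 -> partial_iso X Z (rel_comp R1 R2).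
Proof.
  unfold partial_iso, rel_comp. intros [a1 [b1 c1]] [a2 [b2 c2]]. split; [|split].
  - intros x y y' [u [Hu1 Hu2]] [u' [Hu1' Hu2']]. assert (u = u') by eauto. subst; eauto.
  - intros x x' y [u [Hu1 Hu2]] [u' [Hu1' Hu2']]. assert (u = u') by eauto. subst; eauto.
  - intros x x' y y' [u [Hu1 Hu2]] [u' [Hu1' Hu2']]. rewrite (c1 _ _ _ _ Hu1 Hu1'). eauto.
Qed.

Lemma partial_iso_of_iso (G : digraph) (g : iso G G) : partial_iso G G (fun a b => fwd g a = b).
Proof.
  split; [|split].
  - intros; congruence.
  - intros x x' y H1 H2. rewrite <- (bwd_fwd _ _ g x), <- (bwd_fwd _ _ g x'). congruence.
  - intros; subst. apply fwd_edge.
Qed.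

Lemma partial_iso_reach (X Y : digraph) (R : X -> Y -> Prop) : partial_iso X Y R -> edge_closed X (dom R) ->
  forall x y x', R x y -> reach X x x' -> exists y', R x' y' /\ reach Y y y'.
Proof.
  intros [_ [_ c]] Ho x y x' Hr H. revert y Hr.
  induction H as [x|x x1 x' He Hr' IH]; intros y Hr.
  - exists y; split; auto; constructor.
  - destruct (Ho x x1) as [y1 Hy1]; [exists y; auto|auto|].
    destruct (IH y1 Hy1) as [y' [H1 H2]]. exists y'; split; auto.
    econstructor; [|exact H2]. apply (c _ _ _ _ Hr Hy1); auto.
Qed.

Lemma edge_closed_ran_comp (X Y Z : digraph) (R1 : X -> Y -> Prop) (R2 : Y -> Z -> Prop) :
  partial_iso Y Z R2 -> edge_closed Y (ran R1) -> edge_closed Z (ran R2) ->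
  edge_closed Y (dom R2) -> edge_closed Z (ran (rel_comp R1 R2)).
Proof.
  intros [_ [_ e2]] o1 o2 o2' w w' [x [y [Hxy Hyw]]] Hw.
  destruct (o2 w w') as [y' Hy']; [exists y; auto|auto|].
  assert (Hyy : edge y y') by (apply (e2 _ _ _ _ Hyw Hy'); auto).
  destruct (o1 y y') as [x' Hx']; [exists x; auto|auto|].
  exists x', y'; auto.
Qed.

Lemma partial_iso_image_fin_gen (X Y : digraph) (R : X -> Y -> Prop) (L : list X) :
  partial_iso X Y R -> edge_closed X (dom R) -> edge_closed Y (ran R) ->
  (forall l, In l L -> dom R l) ->
  exists M, forall y, reach_from Y M y <-> exists x, reach_from X L x /\ R x y.
Proof.
  intros HR oD oR HL. destruct (list_images R L HL) as [M [HM1 HM2]]. exists M. intros y. split.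
  - intros [m [Hm Hr]]. destruct (HM1 m Hm) as [l [Hl Hlm]].
    assert (oR' : edge_closed Y (dom (rel_inv R))) by exact oR.
    destruct (partial_iso_reach _ _ _ (partial_iso_inv _ _ _ HR) oR' m l y Hlm Hr) as [x [Hx Hr']].
    exists x. split; [exists l|]; auto.
  - intros [x [[l [Hl Hr]] Hx]]. destruct (HM2 l Hl) as [m [Hm Hlm]].
    destruct (partial_iso_reach _ _ _ HR oD l m x Hlm Hr) as [y' [Hy' Hr']].
    destruct HR as [fR _]. rewrite (fR _ _ _ Hx Hy'). exists m; auto.
Qed.

Lemma partial_iso_union (X Y : digraph) (T S : X -> Y -> Prop) :
  partial_iso X Y T -> partial_iso X Y S ->
  edge_closed X (dom T) -> edge_closed X (dom S) -> edge_closed Y (ran T) -> edge_closed Y (ran S) ->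
  (forall x y, T x y -> (dom S x <-> ran S y)) ->
  (forall x y, S x y -> (dom T x <-> ran T y)) ->
  (forall x y, T x y -> dom S x -> S x y) ->
  partial_iso X Y (fun x y => T x y \/ S x y).
Proof.
  intros HT HS oT oS oT' oS' c1 c2 ag.
  assert (ag2 : forall x y, S x y -> dom T x -> T x y).
  { intros x y Hs [y' Hy']. assert (S x y') by (apply ag; auto; exists y; auto).
    destruct HS as [f _]. rewrite (f _ _ _ Hs H). auto. }
  destruct HT as [fT [iT eT]]. destruct HS as [fS [iS eS]].
  split; [|split].
  - intros x y y' [H|H] [H'|H']; eauto.
    + apply (fS x); auto. apply ag; auto. exists y'; auto.
    + apply (fS x); auto. apply ag; auto. exists y; auto.
  - intros x x' y [H|H] [H'|H']; eauto.
    + apply (iS _ _ y); auto. apply ag; auto. apply (c1 _ _ H). exists x'; auto.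
    + apply (iS _ _ y); auto. apply ag; auto. apply (c1 _ _ H'). exists x; auto.
  - (* a mixed edge has both ends in one piece, since domains and ranges are edge-closed *)
    assert (mixed : forall x x' y y', T x y -> S x' y' -> (edge x x' <-> edge y y')).
    { intros x x' y y' Ht Hs. split; intro He.
      - assert (Hd : dom T x') by (apply (oT x); [exists y|]; auto).
        apply (eT x x' y y'); auto; apply ag2; auto.
      - assert (Hd : ran T y') by (apply (oT' y); [exists x|]; auto).
        assert (Hd' : dom T x') by (apply (c2 _ _ Hs); auto).
        apply (eT x x' y y'); auto; apply ag2; auto. }
    intros x x' y y' [H|H] [H'|H']; eauto.
    split; intro He.
    + assert (Hd : dom S x') by (apply (oS x); [exists y|]; auto).
      apply (eS x x' y y'); auto; apply ag; auto.
    + assert (Hd : ran S y') by (apply (oS' y); [exists x|]; auto).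
      assert (Hd' : dom S x') by (apply (c1 _ _ H'); auto).
      apply (eS x x' y y'); auto; apply ag; auto.
Qed.

Lemma sig_eq {T} {P : T -> Prop} (a b : sig P) : proj1_sig a = proj1_sig b -> a = b.
Proof. destruct a, b; simpl; intro; subst; f_equal; apply proof_irrelevance. Qed.

Definition iso_inv {G H : digraph} (h : iso G H) : iso H G.
Proof.
  refine {| fwd := bwd h; bwd := fwd h; bwd_fwd := fwd_bwd _ _ h; fwd_bwd := bwd_fwd _ _ h |}.
  intros x y. rewrite (fwd_edge _ _ h (bwd h x) (bwd h y)), !fwd_bwd. tauto.
Defined.

Definition iso_comp {G H K : digraph} (h : iso G H) (k : iso H K) : iso G K.
Proof.
  refine {| fwd := fun x => fwd k (fwd h x); bwd := fun z => bwd h (bwd k z) |}.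
  - intros x. rewrite !bwd_fwd. auto.
  - intros z. rewrite !fwd_bwd. auto.
  - intros x y. rewrite (fwd_edge _ _ h). apply (fwd_edge _ _ k).
Defined.

Lemma partial_iso_of_induced_iso (G B : digraph) (P : B -> Prop) (h : iso (induced B P) G) :
  let R := fun g x => proj1_sig (bwd h g) = x in
  partial_iso G B R /\ (forall g, dom R g) /\ (forall x, ran R x <-> P x).
Proof.
  intros R. split; [|split].
  - split; [|split].
    + intros; unfold R in *; congruence.
    + intros g g' y H1 H2. rewrite <- (fwd_bwd _ _ h g), <- (fwd_bwd _ _ h g').
      f_equal. apply sig_eq. unfold R in *; congruence.
    + intros g g' y y' H1 H2. unfold R in *; subst.
      rewrite <- (fwd_bwd _ _ h g) at 1. rewrite <- (fwd_bwd _ _ h g') at 1.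
      rewrite <- (fwd_edge _ _ h). simpl. tauto.
  - intros g. eexists; reflexivity.
  - intros x. split.
    + intros [g <-]. apply (proj2_sig (bwd h g)).
    + intros Hx. exists (fwd h (exist _ x Hx)). unfold R. rewrite bwd_fwd. reflexivity.
Qed.

Definition iso_of_rel (X Y : digraph) (R : X -> Y -> Prop) (HR : partial_iso X Y R)
  (Hd : forall x, dom R x) (Hr : forall y, ran R y) : iso X Y.
Proof.
  refine {| fwd := fun x => proj1_sig (constructive_indefinite_description _ (Hd x));
            bwd := fun y => proj1_sig (constructive_indefinite_description _ (Hr y)) |}.
  - intros x. destruct (constructive_indefinite_description _ (Hd x)) as [y Hy]; simpl.
    destruct (constructive_indefinite_description _ (Hr y)) as [x' Hx']; simpl.
    destruct HR as [_ [i _]]. eauto.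
  - intros y. destruct (constructive_indefinite_description _ (Hr y)) as [x Hx]; simpl.
    destruct (constructive_indefinite_description _ (Hd x)) as [y' Hy']; simpl.
    destruct HR as [f _]. eauto.
  - intros x x'. destruct (constructive_indefinite_description _ (Hd x)) as [y Hy]; simpl.
    destruct (constructive_indefinite_description _ (Hd x')) as [y' Hy']; simpl.
    destruct HR as [_ [_ e]]. eauto.
Defined.

Lemma iso_of_rel_spec X Y R HR Hd Hr x : R x (fwd (iso_of_rel X Y R HR Hd Hr) x).
Proof. simpl. destruct (constructive_indefinite_description _ (Hd x)); auto. Qed.

Lemma induced_iso_of_rel (G : digraph) (Y : G -> Prop) (R : G -> G -> Prop) :
  partial_iso_on G G Y Y R ->
  exists h : iso (induced G Y) (induced G Y), forall x, R (proj1_sig x) (proj1_sig (fwd h x)).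
Proof.
  intros [HR [Hd Hr]].
  set (R' := fun (x y : induced G Y) => R (proj1_sig x) (proj1_sig y)).
  assert (HR' : partial_iso _ _ R').
  { destruct HR as [f [i e]]. split; [|split]; unfold R'.
    - intros; apply sig_eq; eauto.
    - intros; apply sig_eq; eauto.
    - intros; simpl; eauto. }
  assert (Hd' : forall x, dom R' x).
  { intros [x Hx]. destruct (proj1 (Hd x) Hx) as [y Hy].
    assert (Yy : Y y) by (apply Hr; exists x; auto). exists (exist _ y Yy). exact Hy. }
  assert (Hr' : forall y, ran R' y).
  { intros [y Hy]. destruct (proj1 (Hr y) Hy) as [x Hx].
    assert (Yx : Y x) by (apply Hd; exists y; auto). exists (exist _ x Yx). exact Hx. }
  exists (iso_of_rel _ _ R' HR' Hd' Hr'). intros x. apply (iso_of_rel_spec _ _ R').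
Qed.

Definition stabilizes (G : digraph) (g : iso G G) (Y : G -> Prop) := forall c, Y (fwd g c) <-> Y c.

Definition conjugate_on (G X : digraph) (Y : G -> Prop) (psi1 psi2 : G -> X -> Prop) :=
  exists g : iso G G, stabilizes G g Y /\ forall c w, Y c -> (psi1 c w <-> psi2 (fwd g c) w).

Section ConjugacyClasses.
Variables (Gamma X : digraph) (Y : Gamma -> Prop) (W : X -> Prop).
Variable reps : nat -> iso (induced Gamma Y) (induced Gamma Y).
Hypothesis reps_cover : forall h : iso (induced Gamma Y) (induced Gamma Y),
  exists n (g : iso Gamma Gamma),
    forall x, proj1_sig (bwd (reps n) (fwd h x)) = fwd g (proj1_sig x).
Variable psi0 : Gamma -> X -> Prop.
Hypothesis psi0_on : partial_iso_on Gamma X Y W psi0.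

Definition rep_rel m (c d : Gamma) :=
  exists x : induced Gamma Y, proj1_sig x = c /\ proj1_sig (fwd (reps m) x) = d.

Definition in_class m (psi : Gamma -> X -> Prop) :=
  partial_iso_on Gamma X Y W psi /\ exists g : iso Gamma Gamma,
    forall c, Y c -> forall w, psi c w <-> exists d, rep_rel m (fwd g c) d /\ psi0 d w.

Lemma in_class_exists psi : partial_iso_on Gamma X Y W psi -> exists m, in_class m psi.
Proof.
  intros Hpsi. pose proof Hpsi as [I [D R]]. destruct psi0_on as [I0 [D0 R0]].
  set (rho := rel_comp psi (rel_inv psi0)).
  assert (Hrho : partial_iso_on Gamma Gamma Y Y rho).
  { split; [apply partial_iso_comp; auto; apply partial_iso_inv; auto|split].
    - intros c. split.
      + intros Hc. destruct (proj1 (D c) Hc) as [w Hw].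
        destruct (proj1 (R0 w) (proj2 (R w) (ex_intro _ c Hw))) as [d Hd].
        exists d, w. split; auto.
      + intros [d [w [Hw _]]]. apply D. exists w; auto.
    - intros d. split.
      + intros Hd. destruct (proj1 (D0 d) Hd) as [w Hw].
        destruct (proj1 (R w) (proj2 (R0 w) (ex_intro _ d Hw))) as [c Hc].
        exists c, w. split; auto.
      + intros [c [w [_ Hw]]]. apply D0. exists w; auto. }
  destruct (induced_iso_of_rel Gamma Y rho Hrho) as [h Hh].
  destruct (reps_cover h) as [n [g Hg]].
  exists n. split; auto. exists g. intros c Hc w.
  set (x := exist Y c Hc : induced Gamma Y).
  destruct (Hh x) as [w1 [Hw1 Hw1']]. simpl in Hw1.
  pose proof (Hg x) as Hgx. simpl in Hgx.
  destruct I as [fI _]. destruct I0 as [fI0 [iI0 _]].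
  split.
  - intros Hw. assert (w = w1) by eauto. subst w1.
    exists (proj1_sig (fwd h x)). split; auto.
    exists (bwd (reps n) (fwd h x)). split; auto. rewrite fwd_bwd. auto.
  - intros [d [[z [Hz1 Hz2]] Hd]].
    assert (Ez : z = bwd (reps n) (fwd h x)) by (apply sig_eq; congruence).
    subst z. rewrite fwd_bwd in Hz2. subst d.
    assert (w = w1) by eauto. subst. auto.
Qed.

Lemma in_class_stabilizes m psi (g : iso Gamma Gamma) :
  partial_iso_on Gamma X Y W psi ->
  (forall c, Y c -> forall w, psi c w <-> exists d, rep_rel m (fwd g c) d /\ psi0 d w) ->
  stabilizes Gamma g Y.
Proof.
  intros [I [D R]] Kg c. split.
  - intros Hgc.
    set (x := exist Y (fwd g c) Hgc : induced Gamma Y).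
    set (d2 := proj1_sig (fwd (reps m) x)).
    assert (Yd2 : Y d2) by apply (proj2_sig (fwd (reps m) x)).
    destruct psi0_on as [[_ [iI0 _]] [D0 R0]].
    destruct (proj1 (D0 d2) Yd2) as [w Hw].
    destruct (proj1 (R w) (proj2 (R0 w) (ex_intro _ d2 Hw))) as [c' Hc'].
    assert (Yc' : Y c') by (apply D; exists w; auto).
    destruct (proj1 (Kg c' Yc' w) Hc') as [d' [[x' [Hx'1 Hx'2]] Hd']].
    assert (d' = d2) by eauto. subst d'.
    assert (E : fwd (reps m) x' = fwd (reps m) x) by (apply sig_eq; auto).
    apply (f_equal (bwd (reps m))) in E. rewrite !bwd_fwd in E. subst x'. simpl in Hx'1.
    apply (f_equal (bwd g)) in Hx'1. rewrite !bwd_fwd in Hx'1. subst; auto.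
  - intros Hc. destruct (proj1 (D c) Hc) as [w Hw].
    destruct (proj1 (Kg c Hc w) Hw) as [d [[x [Hx _]] _]]. rewrite <- Hx. apply (proj2_sig x).
Qed.

Lemma in_class_conjugate m psi1 psi2 :
  in_class m psi1 -> in_class m psi2 -> conjugate_on Gamma X Y psi1 psi2.
Proof.
  intros [H1 [g1 K1]] [H2 [g2 K2]].
  pose proof (in_class_stabilizes m psi1 g1 H1 K1) as S1.
  pose proof (in_class_stabilizes m psi2 g2 H2 K2) as S2.
  assert (S2' : stabilizes Gamma (iso_inv g2) Y).
  { intros c. simpl. rewrite <- (S2 (bwd g2 c)), fwd_bwd. tauto. }
  exists (iso_comp g1 (iso_inv g2)). split.
  - intros c. simpl. rewrite (S2' (fwd g1 c)). apply S1.
  - intros c w Hc. simpl.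
    assert (Hc' : Y (bwd g2 (fwd g1 c))) by (apply S2', S1; auto).
    rewrite (K1 c Hc w), (K2 _ Hc' w), fwd_bwd. tauto.
Qed.

End ConjugacyClasses.

Lemma countable_conjugacy_classes (Gamma X : digraph) (Y : Gamma -> Prop) (W : X -> Prop) :
  ext_countable_index Gamma Y ->
  exists K : nat -> (Gamma -> X -> Prop) -> Prop,
    (forall psi, partial_iso_on Gamma X Y W psi -> exists m, K m psi) /\
    (forall m psi1 psi2, K m psi1 -> K m psi2 -> conjugate_on Gamma X Y psi1 psi2).
Proof.
  intros [reps Hreps].
  destruct (classic (exists psi0, partial_iso_on Gamma X Y W psi0)) as [[psi0 H0]|Hno].
  - exists (in_class Gamma X Y W reps psi0). split.
    + apply in_class_exists; auto.
    + apply in_class_conjugate; auto.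
  - exists (fun _ _ => False). split; [|intros; contradiction].
    intros psi Hpsi. exfalso. eauto.
Qed.

Lemma to_nat_inj a b a' b' : to_nat (a, b) = to_nat (a', b') -> a = a' /\ b = b'.
Proof.
  intros H. apply (f_equal of_nat) in H. rewrite !cancel_of_to in H.
  exact (conj (f_equal fst H) (f_equal snd H)).
Qed.

Fixpoint encode_list (l : list nat) : nat :=
  match l with [] => 0 | x :: l => S (to_nat (x, encode_list l)) end.

Lemma encode_list_inj l1 l2 : encode_list l1 = encode_list l2 -> l1 = l2.
Proof.
  revert l2; induction l1 as [|x l1 IH]; intros [|y l2] H; try discriminate; auto.
  change (S (to_nat (x, encode_list l1)) = S (to_nat (y, encode_list l2))) in H.
  apply eq_add_S, to_nat_inj in H. destruct H as [-> H]. f_equal; auto.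
Qed.

Lemma map_injective {T} (f : T -> nat) : (forall x y, f x = f y -> x = y) ->
  forall l1 l2, map f l1 = map f l2 -> l1 = l2.
Proof.
  intros Hf l1; induction l1 as [|x l1 IH]; intros [|y l2] H; simpl in *; try discriminate; auto.
  injection H as H1 H2. f_equal; auto.
Qed.

Definition code4 n a b t := to_nat (n, to_nat (a, to_nat (b, t))).

Lemma code4_inj n a b t n' a' b' t' :
  code4 n a b t = code4 n' a' b' t' -> n = n' /\ a = a' /\ b = b' /\ t = t'.
Proof.
  unfold code4. intros H.
  apply to_nat_inj in H. destruct H as [-> H].
  apply to_nat_inj in H. destruct H as [-> H].
  apply to_nat_inj in H. destruct H as [-> ->]. auto.
Qed.

(* Each vertex is coded by the index of a generator it descends from and its image in a copy of Gamma. *)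
Lemma countable_of_in_C (Gamma B : digraph) :
  countable_digraph Gamma -> in_C Gamma B -> countable_digraph B.
Proof.
  intros [cG cG_inj] [H1 [[Z [_ HZ]] _]].
  assert (hz : forall z : B, {h : iso (induced B (desc B z)) Gamma | True}).
  { intros z. apply constructive_indefinite_description. destruct (H1 z) as [h]. exists h; auto. }
  assert (pick : forall x : B, {i : nat & {z : B | nth_error Z i = Some z /\ desc B z x}}).
  { intros x. destruct (constructive_indefinite_description _ (proj1 (HZ x) I)) as [z [Hz Hd]].
    destruct (constructive_indefinite_description _ (In_nth_error _ _ Hz)) as [i Hi].
    exists i, z. auto. }
  exists (fun x => let (i, p) := pick x in let (z, H) := p in
           to_nat (i, cG (fwd (proj1_sig (hz z)) (exist _ x (proj2 H))))).
  intros x y. destruct (pick x) as [i [z [E H]]]. destruct (pick y) as [i' [z' [E' H']]].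
  intros Hc. apply to_nat_inj in Hc. destruct Hc as [-> Hc].
  assert (Ez : z' = z) by congruence. subst z'.
  apply cG_inj in Hc. apply (f_equal (bwd (proj1_sig (hz z)))) in Hc. rewrite !bwd_fwd in Hc.
  apply (f_equal (@proj1_sig _ _)) in Hc. exact Hc.
Qed.

Lemma firstn_S_nth {T} (l : list T) j d :
  nth_error l j = Some d -> firstn (S j) l = firstn j l ++ [d].
Proof.
  revert l. induction j as [|j IH]; intros [|x l] H; simpl in *; try discriminate.
  - inversion H; auto.
  - rewrite (IH l H). auto.
Qed.

Lemma firstn_S_none {T} (l : list T) j : nth_error l j = None -> firstn (S j) l = firstn j l.
Proof. intros H. apply nth_error_None in H. rewrite !firstn_all2; auto. Qed.

Section Embeddings.
Variables (Gamma : digraph) (cG : Gamma -> nat).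
Hypothesis cG_inj : forall x y, cG x = cG y -> x = y.
Hypothesis C2 : forall X : Gamma -> Prop,
  desc_closed Gamma X -> fin_gen_set Gamma X -> ext_countable_index Gamma X.
Variable A : digraph.
Hypothesis HA : in_C Gamma A.

Definition gen_emb := {B : digraph & ((A -> B) * list B)%type}.
Definition emb_cod (s : gen_emb) : digraph := projT1 s.
Definition emb_map (s : gen_emb) : A -> emb_cod s := fst (projT2 s).
Definition emb_gens (s : gen_emb) : list (emb_cod s) := snd (projT2 s).

Definition admissible (s : gen_emb) :=
  in_C Gamma (emb_cod s) /\ le_embedding A (emb_cod s) (emb_map s) /\
  forall v, reach_from (emb_cod s) (emb_gens s) v.

Definition stage (s : gen_emb) (j : nat) (x : emb_cod s) :=
  (exists a, emb_map s a = x) \/ reach_from (emb_cod s) (firstn j (emb_gens s)) x.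

Definition stage_iso (s1 s2 : gen_emb) j (R : emb_cod s1 -> emb_cod s2 -> Prop) :=
  partial_iso_on _ _ (stage s1 j) (stage s2 j) R /\
  (forall a, R (emb_map s1 a) (emb_map s2 a)) /\ length (emb_gens s1) = length (emb_gens s2).

Lemma edge_closed_image (B : digraph) (f : A -> B) :
  le_embedding A B f -> edge_closed B (fun x => exists a, f a = x).
Proof.
  intros [_ [_ H]] x y Hx He. apply (H x y Hx). apply desc_iff_reach, clos_rt1n_step; auto.
Qed.

Lemma edge_closed_stage s j : admissible s -> edge_closed _ (stage s j).
Proof.
  intros [_ [He _]] x y [Hx|Hx] Hxy; [left|right].
  - apply (edge_closed_image _ _ He x y); auto.
  - apply (edge_closed_reach_from _ _ x y); auto.
Qed.

Lemma stage_S_none s j : nth_error (emb_gens s) j = None -> forall x, stage s (S j) x <-> stage s j x.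
Proof. intros H x. unfold stage. rewrite firstn_S_none; tauto. Qed.

Lemma stage_S_some s j d : nth_error (emb_gens s) j = Some d ->
  forall x, stage s (S j) x <-> stage s j x \/ reach _ d x.
Proof.
  intros H x. unfold stage. rewrite (firstn_S_nth _ _ _ H), reach_from_app, reach_from_one. tauto.
Qed.

Lemma stage_iso_comp s1 s2 s3 j R1 R2 :
  stage_iso s1 s3 j R1 -> stage_iso s2 s3 j R2 -> stage_iso s1 s2 j (rel_comp R1 (rel_inv R2)).
Proof.
  intros [[I1 [D1 Ra1]] [F1 L1]] [[I2 [D2 Ra2]] [F2 L2]].
  split; [split; [|split]|split].
  - apply partial_iso_comp; auto. apply partial_iso_inv; auto.
  - intros x. rewrite D1. split.
    + intros [w Hw]. destruct (proj1 (Ra2 w)) as [y Hy]; [apply Ra1; exists x; auto|].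
      exists y, w; split; auto.
    + intros [y [w [H _]]]. exists w; auto.
  - intros y. rewrite D2. split.
    + intros [w Hw]. destruct (proj1 (Ra1 w)) as [x Hx]; [apply Ra2; exists y; auto|].
      exists x, w; split; auto.
    + intros [x [w [_ H]]]. exists w; auto.
  - intros a. exists (emb_map s3 a); split; auto. apply F2.
  - congruence.
Qed.

Lemma stage_iso_ext s1 s2 j k R : stage_iso s1 s2 j R ->
  (forall x, stage s1 k x <-> stage s1 j x) -> (forall y, stage s2 k y <-> stage s2 j y) ->
  stage_iso s1 s2 k R.
Proof.
  intros [[I [D Ra]] FL] E1 E2. split; [split; [|split]|]; auto.
  - intros x. rewrite E1; auto.
  - intros y. rewrite E2; auto.
Qed.

Lemma reach_image (B : digraph) (f : A -> B) : le_embedding A B f ->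
  forall a a', reach A a a' -> reach B (f a) (f a').
Proof.
  intros [_ [Hed _]] a a' H. induction H; [constructor|].
  econstructor 2; [apply Hed; eauto|auto].
Qed.

Lemma image_fin_gen (B : digraph) (f : A -> B) : le_embedding A B f ->
  exists U, forall v, (exists a, f a = v) <-> reach_from B U v.
Proof.
  intros He. destruct HA as [_ [[ZA [_ HZA]] _]]. exists (map f ZA). intros v. split.
  - intros [a <-]. destruct (proj1 (HZA a) I) as [z [Hz Hd]]. apply desc_iff_reach in Hd.
    exists (f z). split; [apply in_map; auto|]. apply reach_image; auto.
  - intros [w [Hw Hr]]. apply in_map_iff in Hw. destruct Hw as [z [<- _]].
    apply (edge_closed_reach _ (fun x => exists a, f a = x) (f z)); auto.
    apply edge_closed_image; auto. exists z; auto.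
Qed.

Lemma stage_fin_gen s j : admissible s -> exists U, forall v, stage s j v <-> reach_from _ U v.
Proof.
  intros [_ [He _]]. destruct (image_fin_gen _ _ He) as [U HU].
  exists (U ++ firstn j (emb_gens s)). intros v. rewrite reach_from_app, <- HU. unfold stage. tauto.
Qed.

Lemma reach_from_inter_reach_fin_gen (B : digraph) : in_C Gamma B -> forall (d : B) U,
  exists N, forall v, (reach_from B U v /\ reach B d v) <-> reach_from B N v.
Proof.
  intros [_ [_ H3]] d U. induction U as [|u U IH].
  - exists []. intros v. unfold reach_from; simpl.
    split; [intros [[z [[] _]] _]|intros [z [[] _]]].
  - destruct IH as [N HN]. destruct (H3 u d) as [N1 [_ HN1]].
    exists (N1 ++ N). intros v. rewrite reach_from_app, <- HN.
    specialize (HN1 v). rewrite desc_list_iff_reach_from, !desc_iff_reach in HN1. rewrite <- HN1.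
    change (u :: U) with ([u] ++ U). rewrite reach_from_app, reach_from_one. tauto.
Qed.

Lemma stage_inter_reach_fin_gen s j d : admissible s ->
  exists N, forall v, (stage s j v /\ reach _ d v) <-> reach_from _ N v.
Proof.
  intros Hs. destruct (stage_fin_gen s j Hs) as [U HU]. destruct Hs as [Hc _].
  destruct (reach_from_inter_reach_fin_gen _ Hc d U) as [N HN].
  exists N. intros v. rewrite HU; auto.
Qed.

Lemma admissible_exists : exists s, admissible s.
Proof.
  destruct HA as [H1 [[ZA [_ HZA]] H3]].
  exists (existT _ A ((fun a : A => a), ZA)). split; [exact HA|split].
  - split; [|split]; simpl; auto; [tauto|]. intros a v [a' <-] _. exists v; auto.
  - intros v. apply desc_list_iff_reach_from, HZA. auto.
Qed.

Lemma choose_representatives (Q : nat -> gen_emb -> Prop) :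
  exists S : nat -> gen_emb,
    forall c, admissible (S c) /\ ((exists s, admissible s /\ Q c s) -> Q c (S c)).
Proof.
  destruct admissible_exists as [s0 G0].
  exists (fun c => match excluded_middle_informative (exists s, admissible s /\ Q c s) with
          | left h => proj1_sig (constructive_indefinite_description _ h) | right _ => s0 end).
  intros c. destruct (excluded_middle_informative _) as [h|h].
  - destruct (constructive_indefinite_description _ h) as [s [Gs Qs]]; simpl. auto.
  - split; auto. intros; contradiction.
Qed.

Lemma overlap_pullback_fin_gen s j (d : emb_cod s) (Phi : Gamma -> emb_cod s -> Prop) :
  admissible s -> partial_iso _ _ Phi -> (forall c, dom Phi c) ->
  (forall x, ran Phi x <-> reach _ d x) ->
  exists L, forall c, reach_from Gamma L c <-> exists x, Phi c x /\ stage s j x.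
Proof.
  intros Gs IPhi DPhi RPhi.
  destruct (stage_inter_reach_fin_gen s j d Gs) as [N HN].
  assert (ocPhi : edge_closed _ (ran Phi)).
  { apply (edge_closed_ext _ (reach _ d)); [|apply edge_closed_reach1].
    intros x; rewrite RPhi; tauto. }
  assert (HN_d : forall x, In x N -> dom (rel_inv Phi) x).
  { intros x Hx. apply RPhi, HN. exists x; split; auto; constructor. }
  destruct (partial_iso_image_fin_gen _ _ (rel_inv Phi) N (partial_iso_inv _ _ _ IPhi) ocPhi
    (fun c c' _ _ => DPhi c') HN_d) as [L HL].
  exists L. intros c. rewrite HL. split.
  - intros [x [Hx Hcx]]. exists x. split; auto. apply HN; auto.
  - intros [x [Hcx Hx]]. exists x. split; auto. apply HN. split; auto.
    apply RPhi. exists c; auto.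
Qed.

Definition stage_classified j := exists S : nat -> gen_emb, (forall n, admissible (S n)) /\
  forall s, admissible s -> exists n R, stage_iso s (S n) j R.

Lemma stage0_classified : stage_classified 0.
Proof.
  destruct (choose_representatives (fun c s => length (emb_gens s) = c)) as [S HS].
  exists S. split; [intros n; apply HS|].
  intros s Gs. set (k := length (emb_gens s)). exists k.
  destruct (HS k) as [GS QS]. specialize (QS (ex_intro _ s (conj Gs eq_refl))).
  exists (fun x y => exists a, emb_map s a = x /\ emb_map (S k) a = y).
  destruct Gs as [_ [[i1 [e1 _]] _]]. destruct GS as [_ [[i2 [e2 _]] _]].
  split; [split; [|split]|split].
  - split; [|split].
    + intros x y y' [a [<- <-]] [a' [Ea <-]]. rewrite (i1 _ _ Ea). auto.
    + intros x x' y [a [<- <-]] [a' [<- Ea]]. rewrite (i2 _ _ Ea). auto.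
    + intros x x' y y' [a [<- <-]] [a' [<- <-]]. rewrite <- e1, <- e2. tauto.
  - intros x. unfold stage, dom. simpl. split.
    + intros [[a <-]|[z [[] _]]]. exists (emb_map (S k) a), a; auto.
    + intros [y [a [<- _]]]. left; exists a; auto.
  - intros y. unfold stage, ran. simpl. split.
    + intros [[a <-]|[z [[] _]]]. exists (emb_map s a), a; auto.
    + intros [x [a [_ <-]]]. left; exists a; auto.
  - intros a; exists a; auto.
  - auto.
Qed.

Section Step.
Variable j : nat.
Variable SS : nat -> gen_emb.
Hypothesis GS : forall n, admissible (SS n).
Variable cB : forall n, emb_cod (SS n) -> nat.
Hypothesis cB_inj : forall n x y, cB n x = cB n y -> x = y.
Variable K : forall n, list Gamma -> list (emb_cod (SS n)) -> nat ->
  (Gamma -> emb_cod (SS n) -> Prop) -> Prop.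
Hypothesis K_cover : forall n L M psi,
  partial_iso_on _ _ (reach_from Gamma L) (reach_from _ M) psi -> exists m, K n L M m psi.
Hypothesis K_conj : forall n L M m psi1 psi2, K n L M m psi1 -> K n L M m psi2 ->
  conjugate_on _ _ (reach_from Gamma L) psi1 psi2.

(* When [s] has a generator [d] at position [j], its code records the representative [SS n] of
   its stage [j], a copy [Phi] of Gamma onto [desc d], a list [L] generating the pull-back along
   [Phi] of the overlap of [desc d] with stage [j], a list [M] generating its image in [SS n],
   and the conjugacy class [m] of the map between them. *)
Definition has_code c s := exists n R, stage_iso s (SS n) j R /\
  ((nth_error (emb_gens s) j = None /\ c = code4 n 0 0 0) \/
   (exists d (Phi : Gamma -> emb_cod s -> Prop) L M m, nth_error (emb_gens s) j = Some d /\
      partial_iso _ _ Phi /\ (forall g, dom Phi g) /\ (forall x, ran Phi x <-> reach _ d x) /\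
      (forall g, reach_from Gamma L g <-> exists x, Phi g x /\ stage s j x) /\
      K n L M m (rel_comp Phi R) /\
      c = code4 n (encode_list (map cG L)) (encode_list (map (cB n) M)) (S m))).

Lemma has_code_exists s n R : admissible s -> stage_iso s (SS n) j R -> exists c, has_code c s.
Proof.
  intros Gs HR. destruct (nth_error (emb_gens s) j) as [d|] eqn:E.
  2:{ exists (code4 n 0 0 0), n, R. split; auto. }
  destruct (proj1 Gs) as [Hiso _]. destruct (Hiso d) as [h].
  pose proof (partial_iso_of_induced_iso Gamma (emb_cod s) (desc _ d) h) as HPhi. cbv zeta in HPhi.
  set (Phi := fun g x => proj1_sig (bwd h g) = x) in HPhi.
  destruct HPhi as [IPhi [DPhi RPhi]].
  assert (RPhi' : forall x, ran Phi x <-> reach _ d x) by (intros x; rewrite RPhi; apply desc_iff_reach).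
  clear RPhi. pose proof HR as [[IR [DR RR]] _].
  destruct (overlap_pullback_fin_gen s j d Phi Gs IPhi DPhi RPhi') as [L HY].
  assert (ocPhi : edge_closed _ (ran Phi)).
  { apply (edge_closed_ext _ (reach _ d)); [|apply edge_closed_reach1].
    intros x; rewrite RPhi'; tauto. }
  set (psi := rel_comp Phi R).
  assert (Ipsi : partial_iso _ _ psi) by (apply partial_iso_comp; auto).
  assert (Dpsi : forall g, reach_from Gamma L g <-> dom psi g).
  { intros g. rewrite HY. split.
    - intros [x [Hx Px]]. destruct (proj1 (DR x) Px) as [w Hw]. exists w, x; auto.
    - intros [w [x [Hx Hw]]]. exists x; split; auto. apply DR; exists w; auto. }
  assert (ocD : edge_closed _ (dom psi)).
  { apply (edge_closed_ext _ (reach_from Gamma L)); [apply Dpsi|apply edge_closed_reach_from]. }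
  assert (ocR : edge_closed _ (ran psi)).
  { apply edge_closed_ran_comp; auto.
    - apply (edge_closed_ext _ (stage (SS n) j)); [apply RR|apply edge_closed_stage; auto].
    - apply (edge_closed_ext _ (stage s j)); [apply DR|apply edge_closed_stage; auto]. }
  assert (HL_d : forall l, In l L -> dom psi l).
  { intros l Hl. apply Dpsi. exists l; split; auto; constructor. }
  destruct (partial_iso_image_fin_gen _ _ psi L Ipsi ocD ocR HL_d) as [M HM].
  assert (Rpsi : forall w, reach_from _ M w <-> ran psi w).
  { intros w. rewrite HM. split.
    - intros [g [_ Hg]]. exists g; auto.
    - intros [g Hg]. exists g. split; auto. apply Dpsi. exists w; auto. }
  destruct (K_cover n L M psi (conj Ipsi (conj Dpsi Rpsi))) as [m Hm].
  exists (code4 n (encode_list (map cG L)) (encode_list (map (cB n) M)) (S m)), n, R.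
  split; auto. right. exists d, Phi, L, M, m.
  exact (conj E (conj IPhi (conj DPhi (conj RPhi' (conj HY (conj Hm eq_refl)))))).
Qed.

Section Gluing.
Variables (s1 s2 : gen_emb) (n : nat) (L : list Gamma) (g : iso Gamma Gamma).
Variables (R1 : emb_cod s1 -> emb_cod (SS n) -> Prop) (R2 : emb_cod s2 -> emb_cod (SS n) -> Prop).
Hypothesis G1 : admissible s1.
Hypothesis G2 : admissible s2.
Hypothesis HR1 : stage_iso s1 (SS n) j R1.
Hypothesis HR2 : stage_iso s2 (SS n) j R2.
Variables (d1 : emb_cod s1) (d2 : emb_cod s2).
Hypothesis E1 : nth_error (emb_gens s1) j = Some d1.
Hypothesis E2 : nth_error (emb_gens s2) j = Some d2.
Variables (Phi1 : Gamma -> emb_cod s1 -> Prop) (Phi2 : Gamma -> emb_cod s2 -> Prop).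
Hypothesis IPhi1 : partial_iso _ _ Phi1.
Hypothesis IPhi2 : partial_iso _ _ Phi2.
Hypothesis DPhi1 : forall c, dom Phi1 c.
Hypothesis DPhi2 : forall c, dom Phi2 c.
Hypothesis RPhi1 : forall x, ran Phi1 x <-> reach _ d1 x.
Hypothesis RPhi2 : forall y, ran Phi2 y <-> reach _ d2 y.
Hypothesis HY1 : forall c, reach_from Gamma L c <-> exists x, Phi1 c x /\ stage s1 j x.
Hypothesis HY2 : forall c, reach_from Gamma L c <-> exists y, Phi2 c y /\ stage s2 j y.
Hypothesis Gstab : stabilizes Gamma g (reach_from Gamma L).
Hypothesis Gpsi : forall c w, reach_from Gamma L c ->
  (rel_comp Phi1 R1 c w <-> rel_comp Phi2 R2 (fwd g c) w).

Let T := rel_comp R1 (rel_inv R2).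
Let Sg := rel_comp (rel_inv Phi1) (rel_comp (fun a b => fwd g a = b) Phi2).

Lemma glue_dom x : dom Sg x <-> reach _ d1 x.
Proof.
  split.
  - intros [y [c [H _]]]. apply RPhi1. exists c; auto.
  - intros Hx. destruct (proj2 (RPhi1 x) Hx) as [c Hc]. destruct (DPhi2 (fwd g c)) as [y Hy].
    exists y, c. split; auto. exists (fwd g c); auto.
Qed.

Lemma glue_ran y : ran Sg y <-> reach _ d2 y.
Proof.
  split.
  - intros [x [c [_ [e [_ H]]]]]. apply RPhi2. exists e; auto.
  - intros Hy. destruct (proj2 (RPhi2 y) Hy) as [e He]. destruct (DPhi1 (bwd g e)) as [x Hx].
    exists x, (bwd g e). split; auto. exists e; split; auto. apply fwd_bwd.
Qed.

Lemma glue_agree x y : T x y -> dom Sg x -> Sg x y.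
Proof.
  intros [w [H1 H2]] Hx. apply glue_dom in Hx.
  destruct (proj2 (RPhi1 x) Hx) as [c Hc].
  destruct HR1 as [[_ [DR1 _]] _]. destruct HR2 as [[[_ [iR2 _]] _] _].
  assert (Yc : reach_from Gamma L c) by (apply HY1; exists x; split; auto; apply DR1; exists w; auto).
  destruct (proj1 (Gpsi c w Yc) (ex_intro _ x (conj Hc H1))) as [y' [Hy'1 Hy'2]].
  assert (y' = y) by (apply (iR2 _ _ w); auto). subst y'.
  exists c; split; auto. exists (fwd g c); auto.
Qed.

Lemma glue_compat_T x y : T x y -> (dom Sg x <-> ran Sg y).
Proof.
  intros [w [H1 H2]]. rewrite glue_dom, glue_ran.
  destruct HR1 as [[[fR1 [iR1 _]] [DR1 _]] _]. destruct HR2 as [[[fR2 [iR2 _]] [DR2 _]] _].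
  pose proof IPhi1 as [fP1 [iP1 _]]. pose proof IPhi2 as [fP2 [iP2 _]].
  split.
  - intros Hx. destruct (proj2 (RPhi1 x) Hx) as [c Hc].
    assert (Yc : reach_from Gamma L c) by (apply HY1; exists x; split; auto; apply DR1; exists w; auto).
    destruct (proj1 (Gpsi c w Yc) (ex_intro _ x (conj Hc H1))) as [y' [Hy'1 Hy'2]].
    assert (y' = y) by eauto. subst y'. apply RPhi2. exists (fwd g c); auto.
  - intros Hy. destruct (proj2 (RPhi2 y) Hy) as [e He].
    assert (Ye : reach_from Gamma L e) by (apply HY2; exists y; split; auto; apply DR2; exists w; auto).
    set (c := bwd g e).
    assert (Yc : reach_from Gamma L c) by (apply Gstab; unfold c; rewrite fwd_bwd; auto).
    assert (Hp2 : rel_comp Phi2 R2 (fwd g c) w) by (unfold c; rewrite fwd_bwd; exists y; auto).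
    destruct (proj2 (Gpsi c w Yc) Hp2) as [x' [Hx'1 Hx'2]].
    assert (x' = x) by eauto. subst x'. apply RPhi1. exists c; auto.
Qed.

Lemma glue_compat_S x y : Sg x y -> (dom T x <-> ran T y).
Proof.
  intros [c [Hcx [e [Ee Hey]]]]. subst e.
  destruct (stage_iso_comp _ _ _ _ _ _ HR1 HR2) as [[_ [DT RT]] _].
  fold T in DT, RT. rewrite <- DT, <- RT.
  destruct HR1 as [[[fR1 [iR1 _]] [DR1 _]] _]. destruct HR2 as [[[fR2 [iR2 _]] [DR2 _]] _].
  pose proof IPhi1 as [fP1 [iP1 _]]. pose proof IPhi2 as [fP2 [iP2 _]].
  split.
  - intros Px. assert (Yc : reach_from Gamma L c) by (apply HY1; exists x; auto).
    destruct (proj1 (DR1 x) Px) as [w Hw].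
    destruct (proj1 (Gpsi c w Yc) (ex_intro _ x (conj Hcx Hw))) as [y' [Hy'1 Hy'2]].
    assert (y' = y) by eauto. subst y'. apply DR2. exists w; auto.
  - intros Py. assert (Yc : reach_from Gamma L c) by (apply Gstab, HY2; exists y; auto).
    destruct (proj1 (HY1 c) Yc) as [x' [Hx' Px']].
    assert (x' = x) by eauto. subst; auto.
Qed.

Lemma glue_stage_iso : stage_iso s1 s2 (S j) (fun x y => T x y \/ Sg x y).
Proof.
  destruct (stage_iso_comp _ _ _ _ _ _ HR1 HR2) as [[IT [DT RT]] [FT LT]].
  fold T in IT, DT, RT, FT.
  assert (ISg : partial_iso _ _ Sg).
  { apply partial_iso_comp; [apply partial_iso_inv; auto|].
    apply partial_iso_comp; auto. apply partial_iso_of_iso. }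
  assert (oT : edge_closed _ (dom T)).
  { apply (edge_closed_ext _ (stage s1 j)); [apply DT|apply edge_closed_stage; auto]. }
  assert (oT' : edge_closed _ (ran T)).
  { apply (edge_closed_ext _ (stage s2 j)); [apply RT|apply edge_closed_stage; auto]. }
  assert (oS : edge_closed _ (dom Sg)).
  { apply (edge_closed_ext _ (reach _ d1)); [intros; rewrite glue_dom; tauto|apply edge_closed_reach1]. }
  assert (oS' : edge_closed _ (ran Sg)).
  { apply (edge_closed_ext _ (reach _ d2)); [intros; rewrite glue_ran; tauto|apply edge_closed_reach1]. }
  split; [split; [|split]|split].
  - apply partial_iso_union; auto.
    + apply glue_compat_T.
    + apply glue_compat_S.
    + apply glue_agree.
  - intros x. rewrite (stage_S_some _ _ _ E1), DT, <- glue_dom. unfold dom. split.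
    + intros [[y Hy]|[y Hy]]; exists y; auto.
    + intros [y [Hy|Hy]]; [left|right]; exists y; auto.
  - intros y. rewrite (stage_S_some _ _ _ E2), RT, <- glue_ran. unfold ran. split.
    + intros [[x Hx]|[x Hx]]; exists x; auto.
    + intros [x [Hx|Hx]]; [left|right]; exists x; auto.
  - intros a. left. apply FT.
  - auto.
Qed.

End Gluing.

Lemma same_code_stage_iso c s1 s2 : admissible s1 -> admissible s2 ->
  has_code c s1 -> has_code c s2 -> exists U, stage_iso s1 s2 (S j) U.
Proof.
  intros G1 G2 [n1 [R1 [HR1 Hc1]]] [n2 [R2 [HR2 Hc2]]].
  destruct Hc1 as [[E1 ->]|[d1 [Phi1 [L1 [M1 [m1 [E1 [IPhi1 [DPhi1 [RPhi1 [HY1 [HK1 ->]]]]]]]]]]]];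
  destruct Hc2 as [[E2 Hc]|[d2 [Phi2 [L2 [M2 [m2 [E2 [IPhi2 [DPhi2 [RPhi2 [HY2 [HK2 Hc]]]]]]]]]]]];
  apply code4_inj in Hc; destruct Hc as [<- [Ea [Eb Et]]]; try discriminate.
  - exists (rel_comp R1 (rel_inv R2)).
    apply (stage_iso_ext _ _ j); [apply (stage_iso_comp _ _ (SS n1)); auto| |];
      apply stage_S_none; auto.
  - apply encode_list_inj, (map_injective _ cG_inj) in Ea.
    apply encode_list_inj, (map_injective _ (cB_inj n1)) in Eb.
    injection Et as Et. subst L2 M2 m2.
    destruct (K_conj n1 L1 M1 m1 _ _ HK1 HK2) as [g [Gstab Gpsi]].
    eexists. eapply glue_stage_iso; eauto.
Qed.

End Step.

Lemma stage_classified_S j : stage_classified j -> stage_classified (S j).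
Proof.
  intros [SS [GS HS]].
  assert (XB : forall n, {cB : emb_cod (SS n) -> nat | forall x y, cB x = cB y -> x = y}).
  { intros n. apply constructive_indefinite_description.
    apply countable_of_in_C with Gamma; [exists cG; auto|apply GS]. }
  assert (XK : forall n L (M : list (emb_cod (SS n))),
    {K : nat -> (Gamma -> emb_cod (SS n) -> Prop) -> Prop |
      (forall psi, partial_iso_on _ _ (reach_from Gamma L) (reach_from _ M) psi -> exists m, K m psi) /\
      (forall m psi1 psi2, K m psi1 -> K m psi2 -> conjugate_on _ _ (reach_from Gamma L) psi1 psi2)}).
  { intros n L M. apply constructive_indefinite_description, countable_conjugacy_classes.
    apply C2; [apply reach_from_desc_closed|apply reach_from_fin_gen]. }
  set (cB := fun n => proj1_sig (XB n)).
  set (K := fun n L M => proj1_sig (XK n L M)).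
  assert (cB_inj : forall n x y, cB n x = cB n y -> x = y) by (intros n; apply (proj2_sig (XB n))).
  assert (K_cover := fun n L M => proj1 (proj2_sig (XK n L M))).
  assert (K_conj := fun n L M => proj2 (proj2_sig (XK n L M))).
  destruct (choose_representatives (has_code j SS cB K)) as [S' HS'].
  exists S'. split; [intros c; apply HS'|].
  intros s Gs. destruct (HS s Gs) as [n [R HR]].
  destruct (has_code_exists j SS GS cB K K_cover s n R Gs HR) as [c Hc].
  destruct (HS' c) as [G' R']. specialize (R' (ex_intro _ s (conj Gs Hc))).
  exists c. eapply same_code_stage_iso; eauto. exact K_conj.
Qed.

Lemma all_stages_classified : exists S : nat -> gen_emb, (forall n, admissible (S n)) /\
  forall s, admissible s -> exists n R, stage_iso s (S n) (length (emb_gens s)) R.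
Proof.
  assert (F : forall j, {S : nat -> gen_emb | (forall n, admissible (S n)) /\
      forall s, admissible s -> exists n R, stage_iso s (S n) j R}).
  { intros j. apply constructive_indefinite_description.
    induction j; [apply stage0_classified|apply stage_classified_S; auto]. }
  exists (fun k => proj1_sig (F (fst (of_nat k))) (snd (of_nat k))). split.
  - intros k. apply (proj2_sig (F _)).
  - intros s Gs. destruct (proj2 (proj2_sig (F (length (emb_gens s)))) s Gs) as [n [R HR]].
    exists (to_nat (length (emb_gens s), n)). rewrite cancel_of_to. exists R. exact HR.
Qed.

Lemma stage_full s k : admissible s -> length (emb_gens s) <= k -> forall x, stage s k x.
Proof. intros [_ [_ HZ]] Hk x. right. rewrite firstn_all2; auto. Qed.

Lemma iso_embeddings_of_stage_iso s1 s2 R : admissible s1 -> admissible s2 ->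
  stage_iso s1 s2 (length (emb_gens s1)) R ->
  iso_embeddings A (emb_cod s2) (emb_cod s1) (emb_map s2) (emb_map s1).
Proof.
  intros G1 G2 [[IR [DR RR]] [FR LR]].
  assert (It : partial_iso _ _ (rel_inv R)) by (apply partial_iso_inv; auto).
  assert (Dt : forall y, dom (rel_inv R) y) by (intros y; apply RR, stage_full; auto; rewrite LR; auto).
  assert (Rt : forall x, ran (rel_inv R) x) by (intros x; apply DR, stage_full; auto).
  exists (iso_of_rel _ _ (rel_inv R) It Dt Rt). intros a.
  pose proof (iso_of_rel_spec _ _ (rel_inv R) It Dt Rt (emb_map s2 a)) as H.
  destruct IR as [_ [iR _]]. apply (iR _ _ (emb_map s2 a)); auto.
Qed.

End Embeddings.

Theorem lemma4p2 (Gamma : digraph)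
  (Hcount : countable_digraph Gamma)
  (C1 : forall u : Gamma, isomorphic (induced Gamma (desc Gamma u)) Gamma)
  (C2 : forall X : Gamma -> Prop,
      desc_closed Gamma X -> fin_gen_set Gamma X ->
      ext_countable_index Gamma X)
  (A : digraph) (HA : in_C Gamma A) :
  exists S : nat -> {B : digraph & A -> B},
    forall (B : digraph) (f : A -> B),
      in_C Gamma B -> le_embedding A B f ->
      exists n, iso_embeddings A (projT1 (S n)) B (projT2 (S n)) f.
Proof.
  destruct Hcount as [cG cG_inj].
  destruct (all_stages_classified Gamma cG cG_inj C2 A HA) as [S [GS HS]].
  exists (fun k => existT _ (emb_cod A (S k)) (emb_map A (S k))).
  intros B f HB Hf. pose proof HB as [_ [[Z [_ HZ]] _]].
  set (s := existT _ B (f, Z) : gen_emb A).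
  assert (Gs : admissible Gamma A s).
  { split; [auto|split; [auto|]]. intros v. apply desc_list_iff_reach_from, HZ; auto. }
  destruct (HS s Gs) as [n [R HR]].
  exists n. exact (iso_embeddings_of_stage_iso Gamma A s (S n) R Gs (GS n) HR).
Qed.
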